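(* Let $D_a$ and $D_b$ be braid diagrams that are identical outside a ball and differ inside it by one of the braid-like Reidemeister moves: inside the ball $D_a$ contains the inner tangle $T_a$ (a positive or negative one-crossing kink, a pair of oppositely signed crossings between two strands, or the six-crossing braid-like Reidemeister III tangle on three strands) and $D_b$ contains the corresponding crossingless inner tangle $T_b$ (trivial braid). Let $C(\cdot)$ be a cube-of-resolutions complex assignment, and for $C(D_a)$ let $d_{ij}$ denote the component of the differential that raises the outer cube grading $gr_{out}$ by $i$ and the inner cube grading $gr_{in}$ by $j$. Suppose: (a) with respect to the filtration $\mathcal{F}_{out}$ induced by the outer cube grading, $C(D_a)$ and $C(D_b)$ are filtered chain homotopy equivalent; (b) the homology $H_*(H_*(C(D_a),d_{00}),d_{01}^* )$ lies in a single inner cube grading $gr_{in}=c$. Then for all $k\ge 2$, $E_k(C(D_a))\{-c\}\cong E_k(C(D_b))$, where $E_k(\cdot)$ denotes the $k$-th page of the spectral sequence induced by the cube filtration, the isomorphism is graded with respect to the cube grading $gr_{cube}$, and $\{n\}$ denotes a shift by $n$ in the cube grading.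
   Context: An abstract cube of resolutions complex $C(D)$ for a diagram $D$ with crossings $c_1,\dots,c_k$ is a chain complex which is a direct sum over complete resolutions $S_{i_1\dots i_k}$ ($i_j\in\{0,1\}$, each crossing receiving its $0$- or $1$-resolution), graded by the cube grading $gr_{cube}(S_{i_1\dots i_k})=\sum_j i_j$, whose differential does not decrease the cube grading; $d=d_0+d_1+\cdots$ with $d_j$ raising the cube grading by $j$, and the cube filtration $\mathcal F_{cube}$ induces a spectral sequence $E_k(C(D))$. Given a tangle $T$ inside the diagram (the inner tangle) with complement $T_{out}$ (the outer tangle), the inner cube grading $gr_{in}$ is the sum of the resolution indices over crossings in $T$ and the outer cube grading $gr_{out}$ the sum over crossings outside $T$, so $gr_{in}+gr_{out}=gr_{cube}$; $\mathcal F_{in},\mathcal F_{out}$ are the induced filtrations. $d_{01}^*$ denotes the map induced by $d_{01}$ on $H_*(C(D_a),d_{00})$. *)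

From HB Require Import structures.
From mathcomp Require Import all_boot all_order all_algebra.
Set Implicit Arguments. Unset Strict Implicit. Unset Printing Implicit Defensive.
Import Order.TTheory GRing.Theory.
Local Open Scope ring_scope.

Section CubeComplexes.
Variable R : pzRingType.

(* A cube complex with [no] outer and [ni] inner crossings: an R-module V
   with a bigrading (gr_out, gr_in) given by a complete family of orthogonal
   linear projections p i j (bidegree (i,j), 0 <= i <= no, 0 <= j <= ni), and
   a differential d (d \o d = 0) that decreases neither gr_out nor gr_in. *)
Definition cube_complex (V : lmodType R) (no ni : nat)
    (p : nat -> nat -> {linear V -> V}) (d : {linear V -> V}) : Prop :=
  [/\ forall i j i' j' x,
        p i j (p i' j' x) = if (i == i') && (j == j') then p i j x else 0,
      forall x, x = \sum_(i < no.+1) \sum_(j < ni.+1) p i j x,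
      forall x, d (d x) = 0 &
      forall i j i' j' x, ~~ ((i <= i')%N && (j <= j')%N) ->
        p i' j' (d (p i j x)) = 0].

Definition Fout (V : lmodType R) (p : nat -> nat -> {linear V -> V})
    (k : nat) (x : V) : Prop :=
  forall i j, (i < k)%N -> p i j x = 0.

Definition Fcube (V : lmodType R) (p : nat -> nat -> {linear V -> V})
    (k : nat) (x : V) : Prop :=
  forall i j, (i + j < k)%N -> p i j x = 0.

Definition filtered_htpy_equiv (V W : lmodType R)
    (FV : nat -> V -> Prop) (dV : {linear V -> V})
    (FW : nat -> W -> Prop) (dW : {linear W -> W}) : Prop :=
  exists (f : {linear V -> W}) (g : {linear W -> V})
         (h : {linear V -> V}) (h' : {linear W -> W}),
    [/\ (forall x, f (dV x) = dW (f x)) /\ (forall y, g (dW y) = dV (g y)),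
        (forall k x, FV k x -> FW k (f x)) /\ (forall k y, FW k y -> FV k (g y)),
        (forall k x, FV k x -> FV k (h x)) /\ (forall k y, FW k y -> FW k (h' y)) &
        (forall x, g (f x) - x = dV (h x) + h (dV x)) /\
        (forall y, f (g y) - y = dW (h' y) + h' (dW y))].

(* Spectral sequence of a descending filtration F on a differential module:
   E_r^p = Z_r^p / (Z_{r-1}^{p+1} + B_r^p), with
   Z_r^p = { x in F^p | d x in F^{p+r} },  B_r^p = F^p /\ d (F^{p-r+1}). *)
Definition SSZ (V : lmodType R) (F : nat -> V -> Prop) (d : {linear V -> V})
    (r p : nat) (x : V) : Prop := F p x /\ F (p + r)%N (d x).

Definition SSB (V : lmodType R) (F : nat -> V -> Prop) (d : {linear V -> V})
    (r p : nat) (y : V) : Prop :=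
  F p y /\ exists x, F (p.+1 - r)%N x /\ d x = y.

Definition SSN (V : lmodType R) (F : nat -> V -> Prop) (d : {linear V -> V})
    (r p : nat) (y : V) : Prop :=
  exists a b, [/\ SSZ F d r.-1 p.+1 a, SSB F d r p b & y = a + b].

(* An R-linear isomorphism between subquotients Z/N and Z'/N'
   (N <= Z, N' <= Z'), given by a map on representatives. *)
Definition sq_iso (V W : lmodType R) (Z N : V -> Prop) (Z' N' : W -> Prop)
    : Prop :=
  exists phi : V -> W,
    [/\ forall x, Z x -> Z' (phi x),
        forall x y, Z x -> Z y -> N' (phi (x + y) - (phi x + phi y)),
        forall (a : R) x, Z x -> N' (phi (a *: x) - a *: phi x),
        forall x, N x -> N' (phi x) &
        (forall x, Z x -> N' (phi x) -> N x) /\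
        (forall y, Z' y -> exists2 x, Z x & N' (y - phi x))].

Definition sq_zero (V : lmodType R) (Z N : V -> Prop) : Prop :=
  forall x, Z x -> N x.

Definition dcomp (V : lmodType R) (no ni : nat)
    (p : nat -> nat -> {linear V -> V}) (d : {linear V -> V})
    (i j : nat) (x : V) : V :=
  \sum_(a < no.+1) \sum_(b < ni.+1) p (a + i)%N (b + j)%N (d (p a b x)).

(* H_*(H_*(C, d_00), d_01^* ) is supported in inner cube grading c:
   every bihomogeneous cycle of inner grading j <> c is a boundary.
   Cycles: d00 x = 0 and d01 x in im d00; boundaries: im d00 + d01(ker d00). *)
Definition inner_concentrated (V : lmodType R) (no ni : nat)
    (p : nat -> nat -> {linear V -> V}) (d : {linear V -> V}) (c : nat) : Prop :=
  forall i j x, j <> c -> p i j x = x ->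
    dcomp no ni p d 0 0 x = 0 ->
    (exists y, dcomp no ni p d 0 1 x = dcomp no ni p d 0 0 y) ->
    exists y z, dcomp no ni p d 0 0 z = 0 /\
                x = dcomp no ni p d 0 0 y + dcomp no ni p d 0 1 z.

End CubeComplexes.

(* Compare three filtrations of C(D_a), each given by a weight on the bigrading
   (i, j) = (gr_out, gr_in): the cube filtration (weight i + j), the outer filtration
   shifted by c (weight i + c), and an intermediate one (weight i + min(j, c)) contained
   in both.  Inner concentration says that a bihomogeneous d_00-cycle of inner degree
   j <> c whose d_01 is a d_00-boundary has the form d_00 y + d_01 z.  Using this cell by
   cell, along anti-diagonals and columns of the cube, both inclusions of the
   intermediate filtration induce isomorphisms on E_2, hence on every later page.  So
   E_k of the cube filtration, shifted by c, is E_k of the outer filtration, which the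
   filtered homotopy equivalence carries to that of C(D_b), where the outer and cube
   filtrations coincide.  Below c the shifted outer filtration is everything, so those
   pages vanish. *)

From HB Require Import structures.
From mathcomp Require Import all_boot all_order all_algebra.
From mathcomp Require Import zify.
From Stdlib Require Import Classical ClassicalEpsilon.
Import GRing.Theory.
Local Open Scope ring_scope.
Set Implicit Arguments. Unset Strict Implicit. Unset Printing Implicit Defensive.

(** * Subquotients and pages of filtered complexes *)

Section Subquotients.
Variables (R : pzRingType) (V : lmodType R).

Definition submod_pred (P : V -> Prop) :=
  [/\ P 0, forall x y, P x -> P y -> P (x - y) & forall a x, P x -> P (a *: x)].

Definition subquotient (Z N : V -> Prop) :=
  [/\ submod_pred Z, submod_pred N & forall x, N x -> Z x].

Lemma submod0 P : submod_pred P -> P 0.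
Proof. by case. Qed.

Lemma submodB P x y : submod_pred P -> P x -> P y -> P (x - y).
Proof. by case=> _ HB _; apply: HB. Qed.

Lemma submodZ P a x : submod_pred P -> P x -> P (a *: x).
Proof. by case=> _ _ HZ; apply: HZ. Qed.

Lemma submodN P x : submod_pred P -> P x -> P (- x).
Proof. by move=> HP Px; rewrite -sub0r; apply: submodB => //; apply: submod0. Qed.

Lemma submodD P x y : submod_pred P -> P x -> P y -> P (x + y).
Proof. by move=> HP Px Py; rewrite -[y]opprK; apply: submodB => //; apply: submodN. Qed.

End Subquotients.

Definition induces_iso (R : pzRingType) (V W : lmodType R) (phi : V -> W)
    (Z N : V -> Prop) (Z' N' : W -> Prop) :=
  [/\ forall x, Z x -> Z' (phi x), forall x, N x -> N' (phi x),
      forall y, Z' y -> exists2 x, Z x & N' (y - phi x)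
    & forall x, Z x -> N' (phi x) -> N x].

Section InducedIsos.
Variable R : pzRingType.

Lemma induces_iso_comp (V1 V2 V3 : lmodType R) (f1 : V1 -> V2)
    (f2 : {linear V2 -> V3}) Z1 N1 Z2 N2 Z3 N3 :
  submod_pred N3 -> induces_iso f1 Z1 N1 Z2 N2 -> induces_iso f2 Z2 N2 Z3 N3 ->
  induces_iso (f2 \o f1) Z1 N1 Z3 N3.
Proof.
move=> N3sub [A1 B1 S1 I1] [A2 B2 S2 I2]; split=> /=.
- by move=> x /A1 /A2.
- by move=> x /B1 /B2.
- move=> y3 /S2 [x2 /S1 [x1 Zx1 Nx] Ny]; exists x1 => //.
  have := B2 _ Nx; rewrite linearB => Nx'.
  by rewrite -(subrKA (f2 x2)); apply: submodD.
- by move=> x Zx /(I2 _ (A1 _ Zx)) /(I1 _ Zx).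
Qed.

Lemma induces_iso_equiv (V W : lmodType R) (phi : V -> W) Z N (Z' N' Z'' N'' : W -> Prop) :
  (forall y, Z' y <-> Z'' y) -> (forall y, N' y <-> N'' y) ->
  induces_iso phi Z N Z' N' -> induces_iso phi Z N Z'' N''.
Proof.
move=> EZ EN [A B S I]; split.
- by move=> x /A /EZ.
- by move=> x /B /EN.
- by move=> y /EZ /S [x Zx /EN]; exists x.
- by move=> x Zx /EN; apply: I.
Qed.

Lemma sq_iso_equiv (V W : lmodType R) (Z N Z1 N1 : V -> Prop) (Z' N' Z1' N1' : W -> Prop) :
  (forall x, Z x <-> Z1 x) -> (forall x, N x <-> N1 x) ->
  (forall y, Z' y <-> Z1' y) -> (forall y, N' y <-> N1' y) ->
  sq_iso Z N Z' N' -> sq_iso Z1 N1 Z1' N1'.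
Proof.
move=> EZ EN EZ' EN' [phi [A D S B [I Su]]]; exists phi; split.
- by move=> x /EZ /A /EZ'.
- by move=> x y /EZ Zx /EZ Zy; apply/EN'; apply: D.
- by move=> a x /EZ Zx; apply/EN'; apply: S.
- by move=> x /EN /B /EN'.
- split; first by move=> x /EZ Zx /EN' /(I _ Zx) /EN.
  by move=> y /EZ' /Su [x /EZ Zx /EN' Nx]; exists x.
Qed.

Section Span.
Variables (V1 V2 V3 : lmodType R) (f1 : {linear V1 -> V2}) (f2 : {linear V1 -> V3}).
Variables (Z1 N1 : V1 -> Prop) (Z2 N2 : V2 -> Prop) (Z3 N3 : V3 -> Prop).
Hypotheses (SQ1 : subquotient Z1 N1) (SQ2 : subquotient Z2 N2) (SQ3 : subquotient Z3 N3).
Hypotheses (iso1 : induces_iso f1 Z1 N1 Z2 N2) (iso2 : induces_iso f2 Z1 N1 Z3 N3).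

Let transfer x : Z1 x -> N2 (f1 x) -> N3 (f2 x).
Proof. by case: iso1 => _ _ _ I1 Zx /(I1 _ Zx); case: iso2 => _ B2 _ _ /B2. Qed.

Let preimage : exists pre : V2 -> V1, forall y, Z2 y -> Z1 (pre y) /\ N2 (y - f1 (pre y)).
Proof.
have ex_pre y : exists x, Z2 y -> Z1 x /\ N2 (y - f1 x).
  case: (classic (Z2 y)) => [|nZy]; last by exists 0.
  by case: iso1 => _ _ S1 _ /S1 [x Zx Nx]; exists x.
by exists (fun y => proj1_sig (constructive_indefinite_description _ (ex_pre y))) => y;
  case: (constructive_indefinite_description _ _).
Qed.

(* [Z2/N2 ~ Z1/N1 ~ Z3/N3]: apply [f2] to chosen [f1]-preimages. *)
Lemma sq_iso_of_span : sq_iso Z2 N2 Z3 N3.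
Proof.
case: SQ1 SQ2 SQ3 => [Z1s _ _] [Z2s N2s N2Z] [_ N3s _].
have [A1 B1 _ _] := iso1; have [A2 _ S2 I2] := iso2.
have [pre preP] := preimage.
exists (fun y => f2 (pre y)); split.
- by move=> y /preP [/A2].
- move=> x y Zx Zy.
  have [Zxy Nxy] := preP _ (submodD Z2s Zx Zy).
  have [[Zpx Npx] [Zpy Npy]] := (preP _ Zx, preP _ Zy).
  rewrite -linearD -linearB; apply: transfer; first by apply: submodB => //; apply: submodD.
  have -> : f1 (pre (x + y) - (pre x + pre y)) =
      (x - f1 (pre x)) + (y - f1 (pre y)) - (x + y - f1 (pre (x + y))).
    rewrite linearB linearD opprB (addrACA x (- _) y (- _)) [RHS]addrC.
    by rewrite addrA subrK -opprD.
  by apply: submodB => //; apply: submodD.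
- move=> a x Zx.
  have [[Zax Nax] [Zpx Npx]] := (preP _ (submodZ a Z2s Zx), preP _ Zx).
  rewrite -linearZ -linearB; apply: transfer; first by apply: submodB => //; apply: submodZ.
  have -> : f1 (pre (a *: x) - a *: pre x) =
      a *: (x - f1 (pre x)) - (a *: x - f1 (pre (a *: x))).
    by rewrite linearB linearZ scalerBr opprB [RHS]addrC addrA subrK.
  by apply: submodB => //; apply: submodZ.
- move=> y Ny; have [Zp Np] := preP _ (N2Z _ Ny).
  by apply: transfer => //; rewrite -[f1 _](subKr y); apply: submodB.
- split.
  + move=> y Zy /(I2 _ (proj1 (preP _ Zy))) /B1 Nf.
    by rewrite -(subrK (f1 (pre y)) y); apply: submodD => //; case: (preP _ Zy).
  + move=> w /S2 [x Zx Nw]; exists (f1 x); first exact: A1.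
    have [Zp Np] := preP _ (A1 _ Zx).
    have Nd : N3 (f2 (pre (f1 x)) - f2 x).
      rewrite -linearB; apply: transfer; first exact: submodB.
      by rewrite linearB -opprB; apply: submodN.
    by rewrite -[w - _](subrKA (f2 x)); apply: submodD => //; rewrite -opprB; apply: submodN.
Qed.

End Span.
End InducedIsos.

Definition dfiltration (R : pzRingType) (V : lmodType R) (F : nat -> V -> Prop) (d : V -> V) :=
  [/\ forall n, F n 0, forall n x y, F n x -> F n y -> F n (x + y),
      forall n (a : R) x, F n x -> F n (a *: x), forall n x, F n.+1 x -> F n x
    & forall n x, F n x -> F n (d x)].

(* [SSN] with the index [p.+1 + r.-1] of its [SSZ] part normalised to [p + r];
   the two agree for [0 < r]. *)
Definition SSNr (R : pzRingType) (V : lmodType R) (F : nat -> V -> Prop) (d : {linear V -> V})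
    (r p : nat) (y : V) :=
  exists a b, [/\ F p.+1 a /\ F (p + r)%N (d a), SSB F d r p b & y = a + b].

Lemma SSN_SSNr (R : pzRingType) (V : lmodType R) (F : nat -> V -> Prop)
    (d : {linear V -> V}) r p y :
  (0 < r)%N -> SSN F d r p y <-> SSNr F d r p y.
Proof. by move=> r0; rewrite /SSN /SSNr /SSZ; have -> : (p.+1 + r.-1 = p + r)%N by lia. Qed.

Section Pages.
Variables (R : pzRingType) (V : lmodType R) (F : nat -> V -> Prop) (d : {linear V -> V}).
Hypotheses (HF : dfiltration F d) (dd : forall x, d (d x) = 0).

Lemma filt0 n : F n 0. Proof. by case: HF => H _ _ _ _; apply: H. Qed.
Lemma filtD n x y : F n x -> F n y -> F n (x + y). Proof. by case: HF => _ H _ _ _; apply: H. Qed.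
Lemma filtZ n a x : F n x -> F n (a *: x). Proof. by case: HF => _ _ H _ _; apply: H. Qed.
Lemma filt_d n x : F n x -> F n (d x). Proof. by case: HF => _ _ _ _ H; apply: H. Qed.
Lemma filtN n x : F n x -> F n (- x). Proof. by move=> Fx; rewrite -scaleN1r; apply: filtZ. Qed.
Lemma filtB n x y : F n x -> F n y -> F n (x - y).
Proof. by move=> Fx Fy; apply: filtD => //; apply: filtN. Qed.

Lemma filt_le m n x : (m <= n)%N -> F n x -> F m x.
Proof.
have FS k y : F k.+1 y -> F k y by case: HF => _ _ _ H _; apply: H.
by move=> /subnK <-; elim: (n - m)%N x => // k IH x; rewrite addSn => /FS /IH.
Qed.

Lemma submod_SSZ r p : submod_pred (SSZ F d r p).
Proof.
split; first by split; rewrite ?linear0; apply: filt0.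
  by move=> x y [? ?] [? ?]; split; rewrite ?linearB; apply: filtB.
by move=> a x [? ?]; split; rewrite ?linearZ; apply: filtZ.
Qed.

Lemma submod_SSB r p : submod_pred (SSB F d r p).
Proof.
split; first by split; [apply: filt0 | exists 0; rewrite linear0; split => //; apply: filt0].
  move=> x y [Fx [e [Fe dex]]] [Fy [e' [Fe' dey]]]; split; first exact: filtB.
  by exists (e - e'); rewrite linearB dex dey; split => //; apply: filtB.
move=> a x [Fx [e [Fe dex]]]; split; first exact: filtZ.
by exists (a *: e); rewrite linearZ dex; split => //; apply: filtZ.
Qed.

Lemma submod_SSNr r p : submod_pred (SSNr F d r p).
Proof.
have Zp : submod_pred (fun a => F p.+1 a /\ F (p + r) (d a)).
  by split; [split; rewrite ?linear0; apply: filt0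
     | move=> x y [? ?] [? ?]; split; rewrite ?linearB; apply: filtB
     | move=> a x [? ?]; split; rewrite ?linearZ; apply: filtZ].
split.
- by exists 0, 0; split; [apply: (submod0 Zp) | apply: (submod0 (submod_SSB r p)) | rewrite addr0].
- move=> _ _ [a [b [Za Bb ->]]] [a' [b' [Za' Bb' ->]]].
  exists (a - a'), (b - b'); split; [exact: (submodB Zp) | exact: (submodB (submod_SSB r p)) |].
  by rewrite opprD addrACA.
- move=> k _ [a [b [Za Bb ->]]].
  exists (k *: a), (k *: b); split; [exact: (submodZ k Zp) | exact: (submodZ k (submod_SSB r p)) |].
  by rewrite scalerDr.
Qed.

Lemma SSNr_SSZ r p x : (0 < r)%N -> SSNr F d r p x -> SSZ F d r p x.
Proof.
move=> r0 [a [b [[Fa Fda] [Fb [e [Fe de]]] ->]]]; split.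
  by apply: filtD => //; apply: (filt_le (n := p.+1)).
by rewrite linearD -de dd addr0.
Qed.

Lemma page_subquotient r p : (0 < r)%N -> subquotient (SSZ F d r p) (SSNr F d r p).
Proof.
by move=> r0; split; [apply: submod_SSZ | apply: submod_SSNr | move=> x; apply: SSNr_SSZ].
Qed.

Lemma SSZ_SSNr r p a : F p.+1 a -> F (p + r) (d a) -> SSNr F d r p a.
Proof.
by move=> Fa Fda; exists a, 0; split => //; [apply: (submod0 (submod_SSB r p)) | rewrite addr0].
Qed.

Lemma SSNr_htpy (k : V -> V) (h : {linear V -> V}) r p x :
  (0 < r)%N -> (forall n x, F n x -> F n (k x)) -> (forall n x, F n x -> F n (h x)) ->
  (forall x, k x - x = d (h x) + h (d x)) ->
  SSZ F d r p x -> SSNr F d r p (k x - x).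
Proof.
move=> r0 Fk Fh Hk [Fx Fdx].
have Fhdx : F p.+1 (h (d x)) by apply: Fh; apply: filt_le Fdx; lia.
exists (h (d x)), (d (h x)); split.
- split => //; have := Hk (d x); rewrite dd linear0 addr0 => <-.
  by apply: filtB => //; apply: Fk.
- split; last by exists (h x); split => //; apply: Fh; apply: filt_le Fx; lia.
  have -> : d (h x) = (k x - x) - h (d x) by rewrite Hk addrK.
  by apply: filtB; [apply: filtB => //; apply: Fk | apply: filt_le Fhdx].
- by rewrite Hk addrC.
Qed.

End Pages.

Definition chain_map (R : pzRingType) (V W : lmodType R) (FV : nat -> V -> Prop) (dV : V -> V)
    (FW : nat -> W -> Prop) (dW : W -> W) (phi : V -> W) :=
  (forall x, phi (dV x) = dW (phi x)) /\ (forall n x, FV n x -> FW n (phi x)).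

Definition page_iso (R : pzRingType) (V W : lmodType R) (FV : nat -> V -> Prop)
    (dV : {linear V -> V}) (FW : nat -> W -> Prop) (dW : {linear W -> W}) (phi : V -> W)
    (r p : nat) :=
  induces_iso phi (SSZ FV dV r p) (SSNr FV dV r p) (SSZ FW dW r p) (SSNr FW dW r p).

Section ChainMaps.
Variables (R : pzRingType) (V W : lmodType R) (FV : nat -> V -> Prop) (FW : nat -> W -> Prop).
Variables (dV : {linear V -> V}) (dW : {linear W -> W}).
Hypotheses (HFV : dfiltration FV dV) (HFW : dfiltration FW dW).
Hypotheses (ddV : forall x, dV (dV x) = 0) (ddW : forall y, dW (dW y) = 0).
Variable phi : {linear V -> W}.
Hypothesis Hphi : chain_map FV dV FW dW phi.

Let phi_d x : phi (dV x) = dW (phi x). Proof. by case: Hphi. Qed.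
Let phi_F n x : FV n x -> FW n (phi x). Proof. by case: Hphi => _; apply. Qed.

Lemma chain_map_SSZ r p x : SSZ FV dV r p x -> SSZ FW dW r p (phi x).
Proof. by move=> [? ?]; split; rewrite -?phi_d; apply: phi_F. Qed.

Lemma chain_map_SSNr r p x : SSNr FV dV r p x -> SSNr FW dW r p (phi x).
Proof.
move=> [a [b [[Fa Fda] [Fb [e [Fe de]]] ->]]]; exists (phi a), (phi b); split.
- by split; rewrite -?phi_d; apply: phi_F.
- by split; [apply: phi_F | exists (phi e); rewrite -phi_d de; split => //; apply: phi_F].
- by rewrite linearD.
Qed.

Section Succ.
Variable r : nat.
Hypotheses (r0 : (0 < r)%N) (IH : forall p, page_iso FV dV FW dW phi r p).

Lemma page_iso_succ_surj p y : SSZ FW dW r.+1 p y ->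
  exists2 x, SSZ FV dV r.+1 p x & SSNr FW dW r.+1 p (y - phi x).
Proof.
move=> [Fy Fdy].
have Zy : SSZ FW dW r p y by split => //; apply: (filt_le HFW) Fdy; lia.
have [_ _ surjIH _] := IH p.
have [x [Fx Fdx] [a [b [[Fa Fda] [Fb [e [Fe de]]] Ey]]]] := surjIH _ Zy.
have dphix : dW (phi x) = dW y - dW a.
  by rewrite -[phi x](subKr y) Ey linearB linearD -de ddW addr0.
have Zdx : SSZ FV dV r (p + r) (dV x) by split => //; rewrite ddV; apply: (filt0 HFV).
have Ndx : SSNr FW dW r (p + r) (phi (dV x)).
  rewrite phi_d dphix; exists (dW y), (- dW a); split => //.
  - by split; [apply: (filt_le HFW) Fdy; lia | rewrite ddW; apply: (filt0 HFW)].
  - split; first exact: (filtN HFW).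
    by exists (- a); rewrite linearN; split => //; apply: (filtN HFW); apply: (filt_le HFW) Fa; lia.
have [_ _ _ injIH] := IH (p + r).
have [al [be [[Fal _] [_ [eps [Feps deps]]] Edx]]] := injIH _ Zdx Ndx.
have dx_eps : dV (x - eps) = al by rewrite linearB deps Edx addrK.
exists (x - eps).
  split; last by rewrite dx_eps; apply: (filt_le HFV) Fal; lia.
  by apply: (filtB HFV) => //; apply: (filt_le HFV) Feps; lia.
exists (a + phi eps), b; split.
- split.
    by apply: (filtD HFW); [apply: (filt_le HFW) Fa | apply: phi_F; apply: (filt_le HFV) Feps]; lia.
  have -> : dW (a + phi eps) = dW y - phi al.
    have deps' : dV eps = dV x - al by rewrite -dx_eps linearB subKr.
    by rewrite linearD -phi_d deps' linearB phi_d dphix addrA subrKC.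
  by apply: (filtB HFW) => //; apply: phi_F; apply: (filt_le HFV) Fal; lia.
- by split => //; exists e; split => //; apply: (filt_le HFW) Fe; lia.
- by rewrite linearB opprB addrCA Ey addrCA addrA.
Qed.

Lemma page_iso_succ_inj_low p x : (p < r)%N ->
  SSZ FV dV r.+1 p x -> SSNr FW dW r.+1 p (phi x) -> SSNr FV dV r.+1 p x.
Proof.
move=> pr [Fx Fdx] [a [b [[Fa Fda] [Fb [e [Fe de]]] Ephi]]].
have [_ _ _ injIH] := IH p.
have Zx : SSZ FV dV r p x by split => //; apply: (filt_le HFV) Fdx; lia.
have Nx : SSNr FW dW r p (phi x).
  exists a, b; split => //; first by split => //; apply: (filt_le HFW) Fda; lia.
  by split => //; exists e; split => //; apply: (filt_le HFW) Fe; lia.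
have [al [be [[Fal _] [Fbe [eta [Feta deta]]] Ex]]] := injIH _ Zx Nx.
exists al, be; split => //.
- split => //; have -> : al = x - be by rewrite Ex addrK.
  by rewrite linearB -deta ddV subr0.
- by split => //; exists eta; split => //; apply: (filt_le HFV) Feta; lia.
Qed.

Lemma page_iso_succ_inj p x :
  SSZ FV dV r.+1 p x -> SSNr FW dW r.+1 p (phi x) -> SSNr FV dV r.+1 p x.
Proof.
case: (ltnP p r) => [pr|rp]; first exact: page_iso_succ_inj_low.
move=> [Fx Fdx] [a [b [[Fa Fda] [Fb [e [Fe de]]] Ephi]]].
rewrite subSS in Fe.
have Ze : SSZ FW dW r (p - r) e by split; rewrite // de subnK.
have [_ _ surjIH _] := IH (p - r).
have [eps [Feps Fdeps] [a' [b' [[Fa' Fda'] [_ [e' [_ de']]] Ee]]]] := surjIH _ Ze.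
rewrite subnK // in Fdeps Fda'.
have [_ _ _ injIH] := IH p.
have Zx1 : SSZ FV dV r p (x - dV eps).
  split; first exact: (filtB HFV).
  by rewrite linearB ddV subr0; apply: (filt_le HFV) Fdx; lia.
have Nx1 : SSNr FW dW r p (phi (x - dV eps)).
  exists a, (dW a'); split.
  - by split => //; apply: (filt_le HFW) Fda; lia.
  - by split => //; exists a'; rewrite subSn.
  - by rewrite linearB Ephi phi_d -de -addrA -linearB Ee linearD -de' ddW addr0.
have [al [be [[Fal Fdal] [Fbe [eta [Feta deta]]] Ex1]]] := injIH _ Zx1 Nx1.
exists al, (dV (eta + eps)); split.
- split => //; have -> : al = x - dV eps - be by rewrite Ex1 addrK.
  by rewrite !linearB ddV subr0 -deta ddV subr0.
- split; first by rewrite linearD deta; apply: (filtD HFV).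
  exists (eta + eps); rewrite subSS; split => //.
  by apply: (filtD HFV) => //; apply: (filt_le HFV) Feta; lia.
- by rewrite linearD deta addrA -Ex1 subrK.
Qed.

Lemma page_iso_succ p : page_iso FV dV FW dW phi r.+1 p.
Proof.
split; [exact: chain_map_SSZ | exact: chain_map_SSNr |
        exact: page_iso_succ_surj | exact: page_iso_succ_inj].
Qed.

End Succ.

Lemma page_iso_from k0 : (0 < k0)%N -> (forall p, page_iso FV dV FW dW phi k0 p) ->
  forall k p, (k0 <= k)%N -> page_iso FV dV FW dW phi k p.
Proof.
move=> k00 base k p /subnK <-; elim: (k - k0)%N p => [|n IH] p; first exact: base.
by rewrite addSn; apply: page_iso_succ => //; lia.
Qed.

End ChainMaps.

Section Homotopy.
Variables (R : pzRingType) (V W : lmodType R) (FV : nat -> V -> Prop) (FW : nat -> W -> Prop).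
Variables (dV : {linear V -> V}) (dW : {linear W -> W}).
Hypotheses (HFV : dfiltration FV dV) (HFW : dfiltration FW dW).
Hypotheses (ddV : forall x, dV (dV x) = 0) (ddW : forall y, dW (dW y) = 0).
Variables (f : {linear V -> W}) (g : {linear W -> V}) (h : {linear V -> V}) (h' : {linear W -> W}).
Hypotheses (Hf : chain_map FV dV FW dW f) (Hg : chain_map FW dW FV dV g).
Hypotheses (hF : forall n x, FV n x -> FV n (h x)) (h'F : forall n y, FW n y -> FW n (h' y)).
Hypotheses (gf : forall x, g (f x) - x = dV (h x) + h (dV x))
           (fg : forall y, f (g y) - y = dW (h' y) + h' (dW y)).

Lemma page_iso_of_htpy r p : (0 < r)%N -> page_iso FV dV FW dW f r p.
Proof.
move=> r0.
have f_F n x : FV n x -> FW n (f x) by case: Hf => _; apply.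
have g_F n y : FW n y -> FV n (g y) by case: Hg => _; apply.
split; [exact: (chain_map_SSZ Hf) | exact: (chain_map_SSNr Hf) | |].
- move=> y Zy; exists (g y); first exact: (chain_map_SSZ Hg).
  rewrite -opprB; apply: (submodN (submod_SSNr HFW r p)).
  by apply: (SSNr_htpy HFW ddW (k := f \o g) (h := h')) => // n z Fz; apply: f_F; apply: g_F.
- move=> x Zx /(chain_map_SSNr Hg) Ngf.
  rewrite -[x](subKr (g (f x))); apply: (submodB (submod_SSNr HFV r p)) => //.
  by apply: (SSNr_htpy HFV ddV (k := g \o f) (h := h)) => // n z Fz; apply: g_F; apply: f_F.
Qed.

End Homotopy.

Section Reindexing.
Variables (R : pzRingType) (V : lmodType R) (F G : nat -> V -> Prop) (d : {linear V -> V}).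
Variable c : nat.
Hypothesis FG_shift : forall n x, F n x <-> G (n - c)%N x.

Let FG_at n m x : (n - c = m)%N -> F n x <-> G m x.
Proof. by move=> <-; apply: FG_shift. Qed.

Lemma SSZ_shift r q x : SSZ F d r (q + c) x <-> SSZ G d r q x.
Proof.
rewrite /SSZ (FG_at (m := q)) ?(FG_at (m := q + r)%N) //; lia.
Qed.

Lemma SSNr_shift r q y : SSNr F d r (q + c) y <-> SSNr G d r q y.
Proof.
have E1 z : F (q + c).+1 z <-> G q.+1 z by apply: FG_at; lia.
have E2 z : F (q + c + r) z <-> G (q + r) z by apply: FG_at; lia.
have E3 z : F (q + c) z <-> G q z by apply: FG_at; lia.
have E4 z : F ((q + c).+1 - r) z <-> G (q.+1 - r) z by apply: FG_at; lia.
split=> -[a [b [[Fa Fda] [Fb [e [Fe de]]] ->]]]; exists a, b.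
  by split => //; [split; [apply/E1 | apply/E2] | split; [apply/E3 | exists e; rewrite -E4]].
by split => //; [split; [apply/E1 | apply/E2] | split; [apply/E3 | exists e; rewrite E4]].
Qed.

End Reindexing.

Section SameIndex.
Variables (R : pzRingType) (V : lmodType R) (F G : nat -> V -> Prop) (d : {linear V -> V}).
Hypothesis FG_equiv : forall n x, F n x <-> G n x.

Let FG_shift0 n x : F n x <-> G (n - 0)%N x. Proof. by rewrite subn0. Qed.

Lemma SSZ_equiv r q x : SSZ F d r q x <-> SSZ G d r q x.
Proof. by have := SSZ_shift d FG_shift0 r q x; rewrite addn0. Qed.

Lemma SSNr_equiv r q y : SSNr F d r q y <-> SSNr G d r q y.
Proof. by have := SSNr_shift d FG_shift0 r q y; rewrite addn0. Qed.

End SameIndex.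

(** * Bigraded cube complexes *)

Lemma sum_ord2_single (R : pzRingType) (V : lmodType R) (no ni : nat) (F : nat -> nat -> V) i j :
  (i <= no)%N -> (j <= ni)%N -> (forall a b, (a != i) || (b != j) -> F a b = 0) ->
  \sum_(a < no.+1) \sum_(b < ni.+1) F a b = F i j.
Proof.
rewrite -ltnS -[(j <= ni)%N]ltnS => hi hj HF.
rewrite (bigD1 (Ordinal hi)) //= [X in _ + X]big1 => [|a ne]; last first.
  by apply: big1 => b _; apply: HF; rewrite -val_eqE in ne; rewrite ne.
rewrite addr0 (bigD1 (Ordinal hj)) //= [X in _ + X]big1 ?addr0 // => b ne.
by apply: HF; rewrite -val_eqE in ne; rewrite ne orbT.
Qed.

Section CubeComplex.
Variables (R : pzRingType) (V : lmodType R) (no ni : nat).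
Variables (p : nat -> nat -> {linear V -> V}) (d : {linear V -> V}).
Hypothesis Hcc : cube_complex no ni p d.

Lemma p_p i j i' j' x : p i j (p i' j' x) = if (i == i') && (j == j') then p i j x else 0.
Proof. by case: Hcc => H _ _ _; apply: H. Qed.

Lemma p_id i j x : p i j (p i j x) = p i j x.
Proof. by rewrite p_p !eqxx. Qed.

Lemma p_sum x : x = \sum_(i < no.+1) \sum_(j < ni.+1) p i j x.
Proof. by case: Hcc => _ H _ _; apply: H. Qed.

Lemma cube_dd x : d (d x) = 0.
Proof. by case: Hcc => _ _ H _; apply: H. Qed.

Lemma p_d_p i j i' j' x : ~~ ((i <= i')%N && (j <= j')%N) -> p i' j' (d (p i j x)) = 0.
Proof. by case: Hcc => _ _ _ H; apply: H. Qed.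

Lemma p_outside i j x : (no < i)%N || (ni < j)%N -> p i j x = 0.
Proof.
move=> h; rewrite (p_sum x) linear_sum big1 // => a _; rewrite linear_sum big1 // => b _.
rewrite p_p; case: ifP => // /andP [/eqP e1 /eqP e2].
by move: h (ltn_ord a) (ltn_ord b); rewrite -e1 -e2; lia.
Qed.

Lemma cube_ext x y : (forall i j, p i j x = p i j y) -> x = y.
Proof.
by move=> H; rewrite (p_sum x) (p_sum y); apply: eq_bigr => i _; apply: eq_bigr => j _.
Qed.

Definition supported (S : nat -> nat -> bool) x := forall i j, ~~ S i j -> p i j x = 0.

Lemma supported0 S : supported S 0. Proof. by move=> i j _; rewrite linear0. Qed.

Lemma supportedD S x y : supported S x -> supported S y -> supported S (x + y).
Proof. by move=> Hx Hy i j h; rewrite linearD Hx // Hy // addr0. Qed.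

Lemma supported_sub (S S' : nat -> nat -> bool) x :
  (forall i j, S i j -> S' i j) -> supported S x -> supported S' x.
Proof. by move=> HS Hx i j h; apply: Hx; apply: contra h; apply: HS. Qed.

Lemma supported_p i j x : supported (fun a b => (a == i) && (b == j)) (p i j x).
Proof. by move=> a b h; rewrite p_p; move: h; case: (_ && _). Qed.

Lemma supported_drop S x a b : supported S x -> p a b x = 0 ->
  supported (fun i j => S i j && ~~ ((i == a) && (j == b))) x.
Proof.
by move=> Hx H0 i j; rewrite negb_and negbK => /orP [/Hx //|/andP [/eqP -> /eqP ->]].
Qed.

Lemma supported_none x : supported (fun _ _ => false) x -> x = 0.
Proof. by move=> H; apply: cube_ext => i j; rewrite H // linear0. Qed.

Lemma supported_d (S S' : nat -> nat -> bool) x : supported S x ->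
  (forall a b i j, S a b -> (a <= i)%N -> (b <= j)%N -> S' i j) -> supported S' (d x).
Proof.
move=> Hx HS i j nS'.
rewrite {1}(p_sum x) linear_sum linear_sum big1 // => a _.
rewrite linear_sum linear_sum big1 // => b _.
have [Sab|nSab] := boolP (S a b); last by rewrite (Hx _ _ nSab) !linear0.
have [/andP [h1 h2]|h] := boolP ((a <= i)%N && (j >= b)%N); last by rewrite p_d_p.
by move: nS'; rewrite (HS _ _ _ _ Sab h1 h2).
Qed.

Lemma p_d_box m n x x' : (forall a b, (a <= m)%N -> (b <= n)%N -> p a b x = p a b x') ->
  p m n (d x) = p m n (d x').
Proof.
move=> H; apply/eqP; rewrite -subr_eq0 -!linearB; apply/eqP.
pose outside a b := ~~ ((a <= m)%N && (b <= n)%N).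
have Hs : supported outside (x - x').
  by move=> a b; rewrite negbK => /andP [h1 h2]; rewrite linearB H // subrr.
apply: (supported_d (S' := outside) Hs); last by rewrite /outside negbK !leqnn.
by move=> a b i j h h1 h2; apply: contra h => /andP [h3 h4]; apply/andP; split; lia.
Qed.

Lemma p_d_single i j x :
  (forall a b, (a <= i)%N -> (b <= j)%N -> ~~ ((a == i) && (b == j)) -> p a b x = 0) ->
  p i j (d x) = p i j (d (p i j x)).
Proof.
move=> H; apply: p_d_box => a b ha hb; rewrite p_p.
by case: ifP => [/andP [/eqP -> /eqP ->] //|/negbT h]; apply: H.
Qed.

Definition trunc (S : nat -> nat -> bool) x :=
  \sum_(i < no.+1) \sum_(j < ni.+1) (if S i j then p i j x else 0).

Lemma p_trunc S a b x : p a b (trunc S x) = if S a b then p a b x else 0.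
Proof.
have [/andP [ha hb]|h] := boolP ((a <= no)%N && (b <= ni)%N); last first.
  have h' : (no < a)%N || (ni < b)%N by lia.
  by rewrite p_outside //; case: (S a b) => //; rewrite p_outside.
rewrite /trunc linear_sum (eq_bigr (fun i : 'I_no.+1 =>
  \sum_(j < ni.+1) p a b (if S i j then p i j x else 0))) => [|i _]; last by rewrite linear_sum.
rewrite (sum_ord2_single (F := fun i j => p a b (if S i j then p i j x else 0)) ha hb).
  by case: (S a b); rewrite ?p_id ?linear0.
move=> i j h; case: (S i j); last by rewrite linear0.
by rewrite p_p; case: ifP => // /andP [/eqP e1 /eqP e2]; move: h; rewrite e1 e2 !eqxx.
Qed.

Definition Fw (w : nat -> nat -> nat) n x := forall i j, (w i j < n)%N -> p i j x = 0.

Definition monotone_weight (w : nat -> nat -> nat) :=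
  forall a b i j, (a <= i)%N -> (b <= j)%N -> (w a b <= w i j)%N.

Lemma Fw_dfiltration w : monotone_weight w -> dfiltration (Fw w) d.
Proof.
move=> Hw; split.
- by move=> n i j _; rewrite linear0.
- by move=> n x y Fx Fy i j h; rewrite linearD Fx // Fy // addr0.
- by move=> n a x Fx i j h; rewrite linearZ /= Fx // scaler0.
- by move=> n x Fx i j h; apply: Fx; lia.
- move=> n x Fx i j h.
  apply: (supported_d (S := fun a b => (n <= w a b)%N) (S' := fun a b => (n <= w a b)%N)).
  + by move=> a b; rewrite -ltnNge; apply: Fx.
  + by move=> a b i' j' h1 h2 h3; apply: leq_trans h1 (Hw _ _ _ _ h2 h3).
  + by rewrite -ltnNge.
Qed.

Lemma p_dcomp k l m n y : (k <= m)%N -> (l <= n)%N ->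
  p m n (dcomp no ni p d k l y) = p m n (d (p (m - k) (n - l) y)).
Proof.
move=> hk hl; rewrite /dcomp linear_sum.
rewrite (eq_bigr (fun a : 'I_no.+1 => \sum_(b < ni.+1)
   p m n (p (a + k) (b + l) (d (p a b y))))) => [|a _]; last by rewrite linear_sum.
have [/andP [ha hb]|h] := boolP ((m - k <= no)%N && (n - l <= ni)%N).
  rewrite (sum_ord2_single (F := fun a b => p m n (p (a + k) (b + l) (d (p a b y)))) ha hb).
    by rewrite !subnK // p_id.
  move=> a b h; rewrite p_p; case: ifP => // /andP [/eqP e1 /eqP e2].
  by move: h; rewrite e1 e2 !addnK !eqxx.
rewrite big1 => [|a _]; last first.
  rewrite big1 // => b _; rewrite p_p; case: ifP => // /andP [/eqP e1 /eqP e2].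
  by move: h (ltn_ord a) (ltn_ord b); rewrite e1 e2 !addnK; lia.
by rewrite (p_outside (i := (m - k)%N) (j := (n - l)%N)) ?linear0 //; lia.
Qed.

Lemma p_dcomp_low k l m n y : (n < l)%N -> p m n (dcomp no ni p d k l y) = 0.
Proof.
move=> h; rewrite /dcomp linear_sum big1 // => a _; rewrite linear_sum big1 // => b _.
by rewrite p_p; case: ifP => // /andP [_ /eqP e]; lia.
Qed.

Lemma dcomp_homog k l i j x : p i j x = x ->
  dcomp no ni p d k l x = p (i + k) (j + l) (d x).
Proof.
move=> hx; apply: cube_ext => m n.
have [/andP [/eqP e1 /eqP e2]|h] := boolP ((i + k == m) && (j + l == n)).
  by rewrite -e1 -e2 p_dcomp ?leq_addl // !addnK p_id hx.
rewrite p_p eq_sym (eq_sym n) (negbTE h).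
have [/andP [h1 h2]|h1] := boolP ((k <= m)%N && (l <= n)%N); last first.
  case: (leqP l n) => h2; last by rewrite p_dcomp_low.
  rewrite /dcomp linear_sum big1 // => a _; rewrite linear_sum big1 // => b _.
  by rewrite p_p; case: ifP => // /andP [/eqP e1 /eqP e2]; move: h1; rewrite e1 e2; lia.
rewrite p_dcomp // -hx p_p.
case: ifP => [/andP [/eqP e1 /eqP e2]|_]; last by rewrite !linear0.
by case/negP: h; apply/andP; split; apply/eqP; lia.
Qed.

End CubeComplex.

(** * Cancellation by inner concentration *)

(* [(a, b)] lies strictly above [(i, j - 1)] in the product order; [b.+1] avoids the
   truncated [j - 1] at [j = 0]. *)
Definition upper_region (i j : nat) := fun a b : nat =>
  (i <= a)%N && (j <= b.+1)%N && ~~ ((a == i) && (b.+1 == j)).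

Lemma upper_region_total i j a b : upper_region i j a b -> (i + j <= a + b)%N.
Proof.
move=> /andP [/andP [h1 h2] /negP h3]; case: (ltnP (a + b) (i + j)) => // h.
by case: h3; apply/andP; split; apply/eqP; lia.
Qed.

Section InnerCancellation.
Variables (R : pzRingType) (V : lmodType R) (no ni : nat).
Variables (p : nat -> nat -> {linear V -> V}) (d : {linear V -> V}).
Hypothesis Hcc : cube_complex no ni p d.
Variable c : nat.
Hypothesis Hconc : inner_concentrated no ni p d c.

Lemma inner_concentrated_cell i j x y : j != c -> p i j x = x -> p i j.+1 y = y ->
  p i j (d x) = 0 -> p i j.+1 (d x) = p i j.+1 (d y) ->
  exists u v, [/\ supported p (fun a b => (a == i) && (b == j)) u,
    supported p (fun a b => (a == i) && (b.+1 == j)) v,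
    p i j.-1 (d v) = 0 & x = p i j (d (u + v))].
Proof.
move=> /eqP jc Hx Hy dx0 dx1.
have cycle : dcomp no ni p d 0 0 x = 0 by rewrite (dcomp_homog Hcc _ _ Hx) !addn0 dx0.
have bdry : exists y', dcomp no ni p d 0 1 x = dcomp no ni p d 0 0 y'.
  by exists y; rewrite (dcomp_homog Hcc 0 1 Hx) (dcomp_homog Hcc 0 0 Hy) addn0 addn1 addn0 dx1.
have [y' [z [z_cycle Ex]]] := Hconc jc Hx cycle bdry.
exists (p i j y'), (if j is j'.+1 then p i j' z else 0); split.
- exact: (supported_p Hcc).
- case: (j) => [|j']; first exact: supported0.
  have := supported_p Hcc (i := i) (j := j') z.
  by apply: supported_sub => a b /andP [-> /eqP ->] /=.
- case: (j) => [|j'] /=; first by rewrite !linear0.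
  by move: (congr1 (p i j') z_cycle); rewrite (p_dcomp Hcc) // !subn0 linear0.
- rewrite -{1}Hx {1}Ex !linearD (p_dcomp Hcc) // !subn0; congr (_ + _).
  case: j {jc Hx Hy dx0 dx1 cycle bdry Ex} => [|j'].
    by rewrite (p_dcomp_low Hcc) // !linear0.
  by rewrite (p_dcomp Hcc) // subn0 subn1.
Qed.

Lemma inner_cancel b i j : j != c -> p i j (d b) = 0 -> p i j.+1 (d b) = 0 ->
  (forall a b', (a <= i)%N -> (b' <= j.+1)%N -> ~~ ((a == i) && (b' == j)) ->
     ~~ ((a == i) && (b' == j.+1)) -> p a b' b = 0) ->
  exists u v, [/\ supported p (fun a b' => (a == i) && (b' == j)) u,
    supported p (fun a b' => (a == i) && (b'.+1 == j)) v,
    p i j.-1 (d v) = 0 & p i j b = p i j (d (u + v))].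
Proof.
move=> jc db0 db1 Hb.
have box a b' : (a <= i)%N -> (b' <= j.+1)%N -> p a b' b = p a b' (p i j b + p i j.+1 b).
  move=> ha hb; rewrite linearD !(p_p Hcc).
  have [/andP [/eqP -> /eqP ->]|h1] := boolP ((a == i) && (b' == j)).
    by rewrite /= ?eqxx /= ?(ltn_eqF (ltnSn j)) ?addr0.
  have [/andP [/eqP -> /eqP ->]|h2] := boolP ((a == i) && (b' == j.+1)).
    by rewrite /= ?eqxx /= ?(gtn_eqF (ltnSn j)) ?add0r.
  by rewrite addr0; apply: Hb.
have dx0 : p i j (d (p i j b)) = 0.
  rewrite -db0; apply: (p_d_box Hcc) => a b' ha hb; rewrite (p_p Hcc).
  case: ifP => [/andP [/eqP -> /eqP ->] //|/negbT h].
  by rewrite Hb //; [lia | apply: contra h => /andP [-> /eqP]; lia].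
have dx1 : p i j.+1 (d (p i j b)) = p i j.+1 (d (- p i j.+1 b)).
  apply/eqP; rewrite !linearN -addr_eq0 -!linearD; apply/eqP; rewrite -db1.
  by apply: (p_d_box Hcc) => a b' ha hb; rewrite -box.
by apply: (inner_concentrated_cell (y := - p i j.+1 b)) => //; rewrite ?linearN (p_id Hcc).
Qed.

Lemma inner_cancel_support i j u v : supported p (fun a b' => (a == i) && (b' == j)) u ->
  supported p (fun a b' => (a == i) && (b'.+1 == j)) v -> p i j.-1 (d v) = 0 ->
  supported p (upper_region i j) (d (u + v)).
Proof.
move=> Hu Hv Hdv; rewrite linearD; apply: supportedD.
  apply: (supported_d Hcc Hu) => a b i' j' /andP [/eqP -> /eqP ->] h1 h2.
  by rewrite /upper_region; apply/andP; split; [apply/andP; split|]; lia.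
clear Hu; case: j Hv Hdv => [|j] Hv Hdv.
  have -> : v = 0 by apply: (supported_none Hcc); apply: (supported_sub _ Hv) => a b /andP [].
  by rewrite linear0; apply: supported0.
have Hv' : supported p (fun a b' => (i <= a)%N && (j <= b')%N && ~~ ((a == i) && (b' == j))) (d v).
  apply: supported_drop => //.
  apply: (supported_d Hcc Hv) => a b i' j' /andP [/eqP -> /eqP [->]] h1 h2.
  by apply/andP; split.
apply: supported_sub Hv' => a b /andP [/andP [h1 h2] h3]; rewrite /upper_region.
apply/andP; split; first by apply/andP; split; lia.
by move: h3; apply: contra => /andP [/eqP -> /eqP [->]]; rewrite !eqxx.
Qed.

Definition cancels n (pi pj : nat -> nat) a t :=
  [/\ forall k, (k < n)%N -> p (pi k) (pj k) (a - d t) = 0,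
    forall S : nat -> nat -> bool, (forall k, (k < n)%N -> forall a' b',
       ((a' == pi k) && (b' == pj k)) || ((a' == pi k) && (b'.+1 == pj k)) -> S a' b') ->
       supported p S t,
    forall S : nat -> nat -> bool, (forall k, (k < n)%N -> forall a' b',
       upper_region (pi k) (pj k) a' b' -> S a' b') -> supported p S (d t)
  & forall a' b', (forall k, (k < n)%N -> ~~ upper_region (pi k) (pj k) a' b') ->
      p a' b' (d t) = 0].

(* The cells [(pi k, pj k)] are cleared in the order [k = 0, 1, ...]: the correction
   for cell [k] changes [d t] only in its [upper_region], which must miss the cells
   already cleared, and every other cell in the box below it must be a cleared cell
   or a zero component of [a] that no earlier correction touches. *)
Lemma cancel_seq n (pi pj : nat -> nat) a :
  (forall k, (k < n)%N -> pj k != c) ->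
  (forall k, (k < n)%N -> p (pi k) (pj k) (d a) = 0 /\ p (pi k) (pj k).+1 (d a) = 0) ->
  (forall k, (k < n)%N -> forall a' b', (a' <= pi k)%N -> (b' <= (pj k).+1)%N ->
     ~~ ((a' == pi k) && (b' == pj k)) -> ~~ ((a' == pi k) && (b' == (pj k).+1)) ->
     (exists2 m, (m < k)%N & (pi m == a') && (pj m == b')) \/
     (p a' b' a = 0 /\ forall m, (m < k)%N -> ~~ upper_region (pi m) (pj m) a' b')) ->
  (forall m k, (m < k)%N -> (k < n)%N -> ~~ upper_region (pi k) (pj k) (pi m) (pj m)) ->
  exists t, cancels n pi pj a t.
Proof.
elim: n => [|n IH] Hc Hd HC HD.
  exists 0; split => //.
  - by move=> S _; apply: supported0.
  - by move=> S _; rewrite linear0; apply: supported0.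
  - by move=> *; rewrite !linear0.
have [t [T1 T2 T3 T4]] : exists t, cancels n pi pj a t.
  by apply: IH => [k hk | k hk | k hk | m k h1 h2]; [apply: Hc | apply: Hd | apply: HC | apply: HD];
    lia.
set b := a - d t.
have db : d b = d a by rewrite /b linearB (cube_dd Hcc) subr0.
have [db0 db1] : p (pi n) (pj n) (d b) = 0 /\ p (pi n) (pj n).+1 (d b) = 0.
  by rewrite db; apply: Hd.
have Hbox a' b' : (a' <= pi n)%N -> (b' <= (pj n).+1)%N ->
    ~~ ((a' == pi n) && (b' == pj n)) -> ~~ ((a' == pi n) && (b' == (pj n).+1)) ->
    p a' b' b = 0.
  move=> h1 h2 h3 h4; case: (HC n (ltnSn n) a' b' h1 h2 h3 h4) =>
    [[m hm /andP [/eqP <- /eqP <-]] | [h5 h6]]; first exact: T1.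
  by rewrite /b linearB h5 T4 ?subrr // => k hk; apply: h6.
have [u [v [Hu Hv Hdv Huv]]] := inner_cancel (Hc n (ltnSn n)) db0 db1 Hbox.
have HR := inner_cancel_support Hu Hv Hdv.
have Et : a - d (t + (u + v)) = b - d (u + v) by rewrite /b linearD opprD addrA.
exists (t + (u + v)); split.
- move=> k hk; rewrite Et linearB.
  case: (ltnP k n) => hkn; first by rewrite T1 // HR ?subrr //; apply: HD.
  have -> : k = n by lia.
  by rewrite Huv subrr.
- move=> S HS; apply: supportedD; first by apply: T2 => k hk; apply: HS; lia.
  apply: supportedD.
    by apply: supported_sub Hu => a' b' h; apply: (HS n) => //; rewrite h.
  by apply: supported_sub Hv => a' b' h; apply: (HS n) => //; rewrite h orbT.
- move=> S HS; rewrite linearD; apply: supportedD.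
    by apply: T3 => k hk; apply: HS; lia.
  by apply: supported_sub HR => a' b' h; apply: (HS n).
- move=> a' b' H; rewrite [d (t + _)]linearD [p _ _ (_ + _)]linearD T4 => [|k hk].
    by rewrite HR ?add0r //; apply: H.
  by apply: H; lia.
Qed.

End InnerCancellation.

Section Sweeps.
Variables (R : pzRingType) (V : lmodType R) (no ni : nat).
Variables (p : nat -> nat -> {linear V -> V}) (d : {linear V -> V}).
Hypothesis Hcc : cube_complex no ni p d.
Variable c : nat.
Hypothesis Hconc : inner_concentrated no ni p d c.

Lemma cancel_antidiagonal s hi n a :
  (hi <= s)%N -> (n <= hi.+1)%N ->
  (forall k, (k < n)%N -> (hi - k)%N != c) ->
  (forall k, (k < n)%N ->
     p (s - hi + k)%N (hi - k)%N (d a) = 0 /\ p (s - hi + k)%N (hi - k)%N.+1 (d a) = 0) ->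
  (forall a' b', (a' + b' < s)%N -> p a' b' a = 0) ->
  ((hi < s)%N -> p (s - hi)%N.-1 hi.+1 a = 0) ->
  exists t, [/\ forall k, (k < n)%N -> p (s - hi + k)%N (hi - k)%N (a - d t) = 0,
    supported p (fun a' b' =>
      (s <= a' + b'.+1)%N && (s - hi <= a')%N && (b' <= hi)%N && (hi <= b' + n)%N) t &
    supported p (fun a' b' => (s <= a' + b')%N && (s - hi <= a')%N) (d t)].
Proof.
move=> hs hn Hc Hd Hs Htop.
have HC : forall k, (k < n)%N -> forall a' b', (a' <= s - hi + k)%N -> (b' <= (hi - k).+1)%N ->
     ~~ ((a' == (s - hi + k)%N) && (b' == (hi - k)%N)) ->
     ~~ ((a' == (s - hi + k)%N) && (b' == (hi - k)%N.+1)) ->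
     (exists2 m, (m < k)%N & ((s - hi + m)%N == a') && ((hi - m)%N == b')) \/
     (p a' b' a = 0 /\ forall m, (m < k)%N -> ~~ upper_region (s - hi + m)%N (hi - m)%N a' b').
  move=> k hk a' b' h1 h2 h3 h4.
  case: (ltnP (a' + b') s) => hab.
    right; split; first exact: Hs.
    by move=> m hm; apply/negP => /upper_region_total; lia.
  have [ea|ea] : (a' = s - hi + k)%N \/ (a' = s - hi + k - 1 /\ b' = hi - k + 1)%N.
  + case: (ltnP a' (s - hi + k)) => ha; last by left; lia.
    by right; lia.
  + exfalso; move/negP: h3; apply; apply/andP; split; apply/eqP; lia.
  + case: (posnP k) => hk0.
      right; split; last by move=> m; lia.
      case: ea => e1 e2; rewrite e1 e2.
      have -> : (s - hi + k - 1 = (s - hi).-1)%N by lia.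
      have -> : (hi - k + 1 = hi.+1)%N by lia.
      by apply: Htop; lia.
    left; exists k.-1; first lia.
    by case: ea => e1 e2; apply/andP; split; apply/eqP; lia.
have HD : forall m k, (m < k)%N -> (k < n)%N ->
    ~~ upper_region (s - hi + k)%N (hi - k)%N (s - hi + m)%N (hi - m)%N.
  move=> m k hm hk; rewrite /upper_region; apply/negP => /andP [/andP [h1 _] _]; lia.
have [t [T1 T2 T3 _]] := cancel_seq Hcc Hconc (pi := fun k => (s - hi + k)%N)
  (pj := fun k => (hi - k)%N) Hc Hd HC HD.
exists t; split => //.
- apply: T2 => k hk a' b' /orP [] /andP [/eqP e1 /eqP e2]; apply/andP; split;
    try (apply/andP; split); try (apply/andP; split); lia.
- apply: T3 => k hk a' b' h.
  have := upper_region_total h; move: h; rewrite /upper_region => /andP [/andP [h1 h2] h3] h4.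
  by apply/andP; split; lia.
Qed.

Lemma cancel_column i lo hi a :
  (forall j, (lo <= j)%N -> (j < hi)%N -> j != c) ->
  ((lo < hi)%N -> forall j, (lo <= j)%N -> (j <= hi)%N -> p i j (d a) = 0) ->
  ((lo < hi)%N -> forall a' b', (a' < i)%N -> (b' <= hi)%N -> p a' b' a = 0) ->
  (forall b', (b' < lo)%N -> p i b' a = 0) ->
  exists t, [/\ forall j, (j < hi)%N -> p i j (a - d t) = 0,
    supported p (fun a' b' => (a' == i) && (lo <= b'.+1)%N && (b' < hi)%N) t &
    supported p (upper_region i lo) (d t)].
Proof.
move=> Hc Hd H1 H2.
have Hc' : forall k, (k < hi - lo)%N -> (lo + k)%N != c by move=> k hk; apply: Hc; lia.
have Hd' : forall k, (k < hi - lo)%N -> p i (lo + k)%N (d a) = 0 /\ p i (lo + k)%N.+1 (d a) = 0.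
  by move=> k hk; split; apply: Hd; lia.
have HC : forall k, (k < hi - lo)%N -> forall a' b', (a' <= i)%N -> (b' <= (lo + k).+1)%N ->
     ~~ ((a' == i) && (b' == (lo + k)%N)) -> ~~ ((a' == i) && (b' == (lo + k)%N.+1)) ->
     (exists2 m, (m < k)%N & (i == a') && ((lo + m)%N == b')) \/
     (p a' b' a = 0 /\ forall m, (m < k)%N -> ~~ upper_region i (lo + m)%N a' b').
  move=> k hk a' b' h1 h2 h3 h4.
  case: (ltnP a' i) => ha.
    right; split; first by apply: H1; lia.
    by move=> m hm; rewrite /upper_region; apply/negP => /andP [/andP [? _] _]; lia.
  have ea : a' = i by lia.
  have hb : (b' < lo + k)%N.
    case: (ltnP b' (lo + k)) => // hb; exfalso.
    case: (b' =P (lo + k)%N) => e.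
      by move/negP: h3; apply; rewrite ea e !eqxx.
    by move/negP: h4; apply; apply/andP; split; apply/eqP; lia.
  case: (ltnP b' lo) => hbl.
    right; split; first by rewrite ea; apply: H2.
    move=> m hm; rewrite /upper_region; apply/negP => /andP [/andP [_ h5] h6].
    by move/negP: h6; apply; apply/andP; split; apply/eqP; lia.
  left; exists (b' - lo)%N; first lia.
  by apply/andP; split; apply/eqP; lia.
have HD : forall m k, (m < k)%N -> (k < hi - lo)%N -> ~~ upper_region i (lo + k)%N i (lo + m)%N.
  move=> m k hm hk; rewrite /upper_region; apply/negP => /andP [/andP [_ h5] h6].
  by move/negP: h6; apply; apply/andP; split; apply/eqP; lia.
have [t [T1 T2 T3 T4]] := cancel_seq Hcc Hconc (pi := fun k => i) (pj := fun k => (lo + k)%N)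
  Hc' Hd' HC HD.
exists t; split.
- move=> j hj; case: (leqP lo j) => hl.
    by have := T1 (j - lo)%N; rewrite subnKC //; apply; lia.
  rewrite linearB H2 // T4 ?subrr // => k hk; rewrite /upper_region.
  apply/negP => /andP [/andP [_ h5] h6].
  by move/negP: h6; apply; apply/andP; split; apply/eqP; lia.
- apply: T2 => k hk a' b' /orP [] /andP [/eqP e1 /eqP e2]; rewrite e1 eqxx /=;
    apply/andP; split; lia.
- apply: T3 => k hk a' b'; rewrite /upper_region => /andP [/andP [h1 h2] h3].
  apply/andP; split; first by apply/andP; split; lia.
  apply/negP => /andP [/eqP e1 /eqP e2]; move/negP: h3; apply.
  by apply/andP; split; apply/eqP; lia.
Qed.

Definition cancels_columns i0 m (lo hi : nat -> nat) a t :=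
  [/\ forall i j, (i0 <= i)%N -> (i < i0 + m)%N -> (j < hi i)%N -> p i j (a - d t) = 0,
    forall a' b', (a' < i0)%N -> p a' b' (a - d t) = 0,
    forall S : nat -> nat -> bool, (forall i a' b', (i0 <= i)%N -> (i < i0 + m)%N ->
       (a' == i) && (lo i <= b'.+1)%N && (b' < hi i)%N -> S a' b') -> supported p S t
  & forall S : nat -> nat -> bool, (forall i a' b', (i0 <= i)%N -> (i < i0 + m)%N ->
       upper_region i (lo i) a' b' -> S a' b') -> supported p S (d t)].

Lemma cancel_columns i0 m (lo hi : nat -> nat) a :
  (forall i j, (i0 <= i)%N -> (i < i0 + m)%N -> (lo i <= j)%N -> (j < hi i)%N -> j != c) ->
  (forall i j, (i0 <= i)%N -> (i < i0 + m)%N -> (lo i < hi i)%N -> (lo i <= j)%N ->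
     (j <= hi i)%N -> p i j (d a) = 0) ->
  (forall a' b', (a' < i0)%N -> p a' b' a = 0) ->
  (forall i' i b', (i0 <= i')%N -> (i' < i)%N -> (i < i0 + m)%N -> (lo i < hi i)%N ->
     (b' <= hi i)%N -> (b' < hi i')%N || (ni < b')%N) ->
  (forall i j, (i0 <= i)%N -> (i < i0 + m)%N -> (j < lo i)%N -> p i j a = 0) ->
  (forall i' i, (i0 <= i')%N -> (i' < i)%N -> (i < i0 + m)%N ->
     (lo i == 0)%N || (lo i < lo i')%N) ->
  exists t, cancels_columns i0 m lo hi a t.
Proof.
elim: m => [|m IH] Hc Hd H1 Hhi H2 Hlo.
  exists 0; split.
  - by move=> i j h1 h2; lia.
  - by move=> a' b' h; rewrite linear0 subr0; apply: H1.
  - by move=> S _; apply: supported0.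
  - by move=> S _; rewrite linear0; apply: supported0.
have [t [T1 T2 T3 T4]] : exists t, cancels_columns i0 m lo hi a t.
  apply: IH => // [i j h1 h2 | i j h1 h2 | i' i b' h1 h2 h3 | i j h1 h2 | i' i h1 h2 h3];
    [apply: Hc | apply: Hd | apply: Hhi | apply: H2 | apply: Hlo]; lia.
set b := a - d t.
have [i ei] : exists i, i = (i0 + m)%N by eexists.
have db j : p i j (d b) = p i j (d a) by rewrite /b linearB (cube_dd Hcc) subr0.
have Hc' j : (lo i <= j)%N -> (j < hi i)%N -> j != c by move=> *; apply: (Hc i) => //; lia.
have Hd' : (lo i < hi i)%N -> forall j, (lo i <= j)%N -> (j <= hi i)%N -> p i j (d b) = 0.
  by move=> hlh j h1 h2; rewrite db; apply: Hd => //; lia.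
have Hleft : (lo i < hi i)%N -> forall a' b', (a' < i)%N -> (b' <= hi i)%N -> p a' b' b = 0.
  move=> hlh a' b' ha hb; case: (ltnP a' i0) => ha0; first exact: T2.
  case/orP: (Hhi a' i b' ha0 ha ltac:(lia) hlh hb) => hb'; first by apply: T1 => //; lia.
  by apply: (p_outside Hcc); rewrite hb' orbT.
have Hbelow b' : (b' < lo i)%N -> p i b' b = 0.
  move=> hb'; rewrite /b linearB.
  have -> : p i b' (d t) = 0.
    apply: (T4 (fun a' b'' => ~~ ((a' == i) && (b'' < lo i)%N))); last by rewrite negbK eqxx hb'.
    move=> i1 a' b'' h1 h2 /andP [/andP [h3 h4] h5]; apply/negP => /andP [/eqP e1 h6].
    by have := Hlo i1 i h1 ltac:(lia) ltac:(lia); lia.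
  by rewrite subr0; apply: H2 => //; lia.
have [t' [U1 U2 U3]] := cancel_column Hc' Hd' Hleft Hbelow.
have Et : a - d (t + t') = b - d t' by rewrite /b linearD opprD addrA.
have dt'0 a' b' : (a' < i)%N -> p a' b' (d t') = 0.
  by move=> ha; rewrite U3 //; apply/negP => /andP [/andP [h4 _] _]; lia.
exists (t + t'); split.
- move=> i1 j h1 h2 h3; rewrite Et.
  case: (ltnP i1 i) => hi1; first by rewrite linearB T1 ?dt'0 ?subrr //; lia.
  have ei1 : i1 = i by lia.
  by rewrite ei1 in h3 *; apply: U1.
- by move=> a' b' ha; rewrite Et linearB T2 // dt'0 ?subrr //; lia.
- move=> S HS; apply: supportedD; first by apply: T3 => i1 a' b' h1 h2; apply: HS; lia.
  by apply: supported_sub U2 => a' b' h; apply: (HS i) => //; lia.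
- move=> S HS; rewrite linearD; apply: supportedD.
    by apply: T4 => i1 a' b' h1 h2; apply: HS; lia.
  by apply: supported_sub U3 => a' b' h; apply: (HS i) => //; lia.
Qed.

End Sweeps.

(** * The second page *)

Lemma subKr3 (M : zmodType) (y a b e : M) : y - (y - a - b - e) = b + e + a.
Proof. by rewrite -(addrA y (-a)) -opprD -(addrA y) -opprD subKr -addrA addrC. Qed.

Section PageTwo.
Variables (R : pzRingType) (V : lmodType R) (no ni : nat).
Variables (p : nat -> nat -> {linear V -> V}) (d : {linear V -> V}).
Hypothesis Hcc : cube_complex no ni p d.
Variable c : nat.
Hypothesis Hconc : inner_concentrated no ni p d c.

(* [FC] is the cube filtration and [FO] the outer filtration shifted by [c]; since
   [wG <= wC] and [wG <= wO], [FG] sits inside both and the identity is a filtered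
   map [FG -> FC] and [FG -> FO]. *)
Definition wC (i j : nat) := (i + j)%N.
Definition wO (i j : nat) := (i + c)%N.
Definition wG (i j : nat) := (i + minn j c)%N.
Definition FC := Fw p wC.
Definition FO := Fw p wO.
Definition FG := Fw p wG.

Lemma FC_dfilt : dfiltration FC d.
Proof. by apply: (Fw_dfiltration Hcc) => a b i j; rewrite /wC; lia. Qed.
Lemma FO_dfilt : dfiltration FO d.
Proof. by apply: (Fw_dfiltration Hcc) => a b i j; rewrite /wO; lia. Qed.
Lemma FG_dfilt : dfiltration FG d.
Proof. by apply: (Fw_dfiltration Hcc) => a b i j; rewrite /wG; lia. Qed.

Lemma FG_FC n x : FG n x -> FC n x.
Proof. by move=> Gx i j h; apply: Gx; rewrite /wG /wC in h *; lia. Qed.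
Lemma FG_FO n x : FG n x -> FO n x.
Proof. by move=> Gx i j h; apply: Gx; rewrite /wG /wO in h *; lia. Qed.

Lemma FC_to_FG s z : FC s z ->
  (forall i j, (i + j <= s.+1)%N -> (i + c < s)%N -> p i j (d z) = 0) ->
  exists t w, [/\ FC s.-1 t, FC s (d t), FC s.+1 w, FC s.+2 (d w) &
                  FG s (z - d t - w) /\ FO s (z - d t - w)].
Proof.
move=> Cz dz.
have [t [T1 Ts Td]] := cancel_antidiagonal Hcc Hconc (s := s) (hi := s) (n := (s - c)%N) (a := z)
  (leqnn s) ltac:(lia) ltac:(by move=> k hk; apply/eqP; lia)
  ltac:(by move=> k hk; split; apply: dz; lia) Cz ltac:(by move=> h; lia).
set z1 := z - d t.
have Cz1 i j : (i + j < s)%N -> p i j z1 = 0.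
  by move=> h; rewrite /z1 linearB Cz // Td ?subrr //; apply/negP => /andP [h1 _]; lia.
have Kz1 i j : (i + j = s)%N -> (i + c < s)%N -> p i j z1 = 0.
  by move=> h1 h2; have := T1 i ltac:(lia); rewrite subnn add0n; have -> : (s - i = j)%N by lia.
have dz1 : d z1 = d z by rewrite /z1 linearB (cube_dd Hcc) subr0.
set w := trunc no ni p (fun i j => (i + c < s)%N) z1.
have pw i j : p i j w = if (i + c < s)%N then p i j z1 else 0 by apply: (p_trunc Hcc).
have Cw : FC s.+1 w.
  move=> i j; rewrite /wC pw => h; case: ifP => // h2.
  by case: (ltnP (i + j) s) => h3; [apply: Cz1 | apply: Kz1]; lia.
have Cdw : FC s.+2 (d w).
  move=> i j; rewrite /wC => h; case: (ltnP (i + j) s.+1) => h1.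
    by apply: (filt_d FC_dfilt Cw).
  rewrite (p_d_single Hcc) => [|a b ha hb hne]; last first.
    apply: Cw; rewrite /wC; case: (ltnP (a + b) s.+1) => // h4.
    by case/negP: hne; apply/andP; split; apply/eqP; lia.
  rewrite pw; case: ifP => h2; last by rewrite !linear0.
  rewrite -(p_d_single Hcc) => [|a b ha hb hne]; first by rewrite dz1 dz //; lia.
  by case: (ltnP (a + b) s) => h3; [apply: Cz1 | apply: Kz1]; lia.
exists t, w; split => //.
- by move=> i j h; apply: Ts; apply/negP => /andP [/andP [/andP [h1 _] _] _]; rewrite /wC in h; lia.
- by move=> i j h; apply: Td; apply/negP => /andP [h1 _]; rewrite /wC in h; lia.
split.
- move=> i j; rewrite /wG linearB pw => h.
  by case: ifP => h2; rewrite ?subrr // subr0; apply: Cz1; lia.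
- by move=> i j; rewrite /wO linearB pw => h; case: ifP; rewrite ?subrr //; lia.
Qed.

Lemma FO_to_FG m z : FO m z ->
  (forall i j, (i < m)%N -> (i + c < m + 2)%N -> (i + j <= m)%N -> p i j (d z) = 0) ->
  exists t x0, [/\ FO m t, FG m x0, FO (m + 2) (z - d t - x0) &
    forall i j, (m + 2 <= i + c)%N -> (i + minn j c < m.+1)%N -> p i j (d x0) = 0].
Proof.
move=> Oz dz.
have [t [T1 T2 T3 _]] := cancel_columns Hcc Hconc (i0 := (m - c)%N)
  (m := ((m + 2 - c) - (m - c))%N) (lo := fun=> 0%N) (hi := fun i => (m - i)%N) (a := z)
  ltac:(by move=> i j *; apply/eqP; lia) ltac:(by move=> i j *; apply: dz; lia)
  ltac:(by move=> a' b' h; apply: Oz; rewrite /wO; lia)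
  ltac:(by move=> *; apply/orP; left; lia) ltac:(by move=> *; lia) ltac:(by move=> *; lia).
have Ot : FO m t.
  have St : supported p (fun a _ => (m <= a + c)%N) t.
    by apply: (T3 (fun a _ => (m <= a + c)%N)) => i1 a' b' h1 h2 /andP [/andP [/eqP -> _] _]; lia.
  by move=> i j; rewrite /wO => h; apply: St; apply/negP; lia.
set z1 := z - d t.
have Oz1 : FO m z1 by apply: (filtB FO_dfilt) => //; apply: (filt_d FO_dfilt).
have Kz1 i j : (i + c < m + 2)%N -> (i + j < m)%N -> p i j z1 = 0.
  by move=> h1 h2; case: (ltnP i (m - c)) => h3; [apply: T2 | apply: T1]; lia.
set x0 := trunc no ni p (fun i j => (i + c < m + 2)%N) z1.
have px0 i j : p i j x0 = if (i + c < m + 2)%N then p i j z1 else 0 by apply: (p_trunc Hcc).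
have Gx0 : FG m x0.
  move=> i j; rewrite /wG px0 => h; case: ifP => // h2.
  by case: (ltnP (i + c) m) => h3; [apply: Oz1; rewrite /wO | apply: Kz1]; lia.
exists t, x0; split => //.
- by move=> i j; rewrite /wO linearB px0 => h; case: ifP; rewrite ?subrr //; lia.
- move=> i j h1 h2.
  apply: (supported_d Hcc (S := fun a b => (a + c < m + 2)%N && (m <= a + minn b c)%N)
     (S' := fun a b => (a + c < m + 2)%N || (m + 1 <= a + minn b c)%N)).
  + move=> a b; rewrite negb_and => /orP [] h; first by rewrite px0 (negbTE h).
    by apply: Gx0; rewrite /wG; lia.
  + by move=> a b i' j' /andP [h3 h4] h5 h6; apply/orP; lia.
  + by apply/negP => /orP []; lia.
Qed.

Lemma FG_boundary_correction m u : FC m u -> FO (m - 2) u -> FG m.+1 (d u) ->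
  exists t, [/\ FC m.-1 t, FG (m - 2) t, FC m (d t) & FG m (u - d t)].
Proof.
move=> Cu Ou Gdu.
have [t [T1 T2 T3 T4]] := cancel_columns Hcc Hconc (i0 := (m - 2 - c)%N)
  (m := ((m - c) - (m - 2 - c))%N) (lo := fun i => (m - i)%N) (hi := fun=> ni.+1) (a := u)
  ltac:(by move=> i j *; apply/eqP; lia) ltac:(by move=> i j *; apply: Gdu; rewrite /wG; lia)
  ltac:(by move=> a' b' h; apply: Ou; rewrite /wO; lia)
  ltac:(by move=> *; lia) ltac:(by move=> i j *; apply: Cu; rewrite /wC; lia)
  ltac:(by move=> *; lia).
pose St i j := (m - 2 - c <= i)%N && (i < m - c)%N && (m <= i + j.+1)%N.
have Ht : supported p St t.
  apply: (T3 St) => i' a' b' h1 h2 /andP [/andP [/eqP -> h3] h4].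
  by apply/andP; split; [apply/andP; split|]; lia.
have Cdt : FC m (d t).
  move=> i j; rewrite /wC => h; apply: (T4 (fun a b => (m <= a + b)%N)); last by apply/negP; lia.
  by move=> i1 a' b' h1 h2 /upper_region_total; lia.
exists t; split => //.
- by move=> i j; rewrite /wC => h; apply: Ht; apply/negP => /andP [_ h2]; lia.
- by move=> i j; rewrite /wG => h; apply: Ht; apply/negP => /andP [/andP [h1 h2] h3]; lia.
- move=> i j; rewrite /wG => h.
  case: (ltnP i (m - 2 - c)) => hi0; first by apply: T2.
  case: (ltnP i (m - c)) => hi1; last by rewrite linearB Cu ?Cdt ?subrr // /wC; lia.
  case: (leqP j ni) => hj; first by apply: T1 => //; lia.
  by rewrite (p_outside Hcc) // hj orbT.
Qed.

Lemma FG_raise s a : FG s a -> FG (s + 2) (d a) ->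
  (forall i j, (c <= j)%N -> (i + c = s)%N -> p i j a = 0) ->
  exists t, [/\ FG (s - 1) t, FO s.+1 t, FG s (d t) & FG s.+1 (a - d t)].
Proof.
move=> Ga Gda Ha.
case: (posnP c) => c0.
  exists 0; rewrite linear0 subr0; split; try exact: (filt0 FG_dfilt).
    exact: (filt0 FO_dfilt).
  move=> i j; rewrite /wG => h.
  by case: (ltnP (i + minn j c) s) => h1; [apply: Ga | apply: Ha]; rewrite /wG; lia.
have [t [T1 Ts Td]] := cancel_antidiagonal Hcc Hconc (s := s) (hi := (minn c s.+1).-1)
  (n := minn c s.+1) (a := a) ltac:(lia) ltac:(lia) ltac:(by move=> k hk; apply/eqP; lia)
  ltac:(by move=> k hk; split; apply: Gda; rewrite /wG; lia)
  ltac:(by move=> a' b' h; apply: Ga; rewrite /wG; lia) ltac:(by move=> h; apply: Ha; lia).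
have Gdt : FG s (d t).
  by move=> i j; rewrite /wG => h; apply: Td; apply/negP => /andP [h1 h2]; lia.
exists t; split => //.
- move=> i j; rewrite /wG => h; apply: Ts.
  by apply/negP => /andP [/andP [/andP [h1 h2] h3] h4]; lia.
- move=> i j; rewrite /wO => h; apply: Ts.
  by apply/negP => /andP [/andP [/andP [h1 h2] h3] h4]; lia.
- move=> i j; rewrite /wG => h.
  case: (ltnP (i + minn j c) s) => h1; first by rewrite linearB Ga ?Gdt ?subrr.
  case: (leqP c j) => hj.
    by rewrite linearB (Ha i j hj) ?Td ?subrr //; [apply/negP => /andP [h2 h3] | ]; lia.
  have E1 : (s - (minn c s.+1).-1 + ((minn c s.+1).-1 - j) = i)%N by lia.
  have E2 : ((minn c s.+1).-1 - ((minn c s.+1).-1 - j) = j)%N by lia.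
  by have := T1 ((minn c s.+1).-1 - j)%N ltac:(lia); rewrite E1 E2.
Qed.

Lemma page2_GC_surj s y : SSZ FC d 2 s y ->
  exists2 x, SSZ FG d 2 s x & SSNr FC d 2 s (y - x).
Proof.
move=> [Cy Cdy].
have dy i j : (i + j <= s.+1)%N -> (i + c < s)%N -> p i j (d y) = 0.
  by move=> h _; apply: Cdy; rewrite /wC; lia.
have [t1 [w [Ct1 Cdt1 Cw Cdw [Gz Oz]]]] := FC_to_FG Cy dy.
set z := y - d t1 - w.
have Cdz : FC (s + 2) (d z).
  rewrite /z !linearB (cube_dd Hcc) subr0; apply: (filtB FC_dfilt) => //.
  by apply: (filt_le FC_dfilt _ Cdw); lia.
have Odz : FO (s + 2 - 2) (d z) by rewrite addnK; apply: (filt_d FO_dfilt).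
have Gddz : FG (s + 2).+1 (d (d z)) by rewrite (cube_dd Hcc); apply: (filt0 FG_dfilt).
have [t [Ct Gt Cdt Gzt]] := FG_boundary_correction Cdz Odz Gddz.
exists (z - t).
  split; last by rewrite linearB.
  by apply: (filtB FG_dfilt) => //; rewrite addnK in Gt.
exists (w + t), (d t1); split.
- split; first by apply: (filtD FC_dfilt) => //; apply: (filt_le FC_dfilt _ Ct); lia.
  rewrite linearD; apply: (filtD FC_dfilt) => //.
  by apply: (filt_le FC_dfilt _ Cdw); lia.
- by split => //; exists t1; split => //; apply: (filt_le FC_dfilt _ Ct1); lia.
- by rewrite /z subKr3.
Qed.

Lemma page2_GC_inj s x : SSZ FG d 2 s x -> SSNr FC d 2 s x -> SSNr FG d 2 s x.
Proof.
move=> [Gx Gdx] [a [b [[Ca Cda] [Cb [e [Ce de]]] Ex]]].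
have Eb : b = x - a by rewrite Ex addrC addKr.
have de0 i j : (i + j <= (s - 1).+1)%N -> (i + c < s - 1)%N -> p i j (d e) = 0.
  move=> h1 h2; rewrite de; case: (ltnP (i + j) s) => h3; first exact: Cb.
  by rewrite Eb linearB Gx ?Ca ?subrr // /wG /wC; lia.
have [t1 [w [Ct1 Cdt1 Cw Cdw [Ge2 Oe2]]]] := FC_to_FG Ce de0.
set e2 := e - d t1 - w; set a2 := a + d w.
have Ex2 : x = a2 + d e2.
  by rewrite /a2 /e2 !linearB (cube_dd Hcc) subr0 -addrA subrKC de -Ex.
have Ca2 : FC (s + 1) a2.
  apply: (filtD FC_dfilt); first by rewrite addn1.
  by apply: (filt_le FC_dfilt _ Cdw); lia.
have Oa2 : FO (s + 1 - 2) a2.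
  have -> : a2 = x - d e2 by rewrite Ex2 addrK.
  apply: (filtB FO_dfilt); first by apply: (filt_le FO_dfilt _ (FG_FO Gx)); lia.
  by apply: (filt_d FO_dfilt); apply: (filt_le FO_dfilt _ Oe2); lia.
have da2 : d a2 = d x by rewrite Ex2 [d (_ + d e2)]linearD (cube_dd Hcc) addr0.
have Gda2 : FG (s + 1).+1 (d a2) by rewrite da2; apply: (filt_le FG_dfilt _ Gdx); lia.
have [t [Ct Gt Cdt Ga3]] := FG_boundary_correction Ca2 Oa2 Gda2.
exists (a2 - d t), (d (e2 + t)); split.
- split; first by rewrite -addn1.
  by rewrite linearB (cube_dd Hcc) subr0 da2.
- split.
    have -> : d (e2 + t) = x - (a2 - d t).
      by rewrite Ex2 [d (e2 + t)]linearD opprB [a2 + _]addrC -addrA subrKC.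
    by apply: (filtB FG_dfilt) => //; apply: (filt_le FG_dfilt _ Ga3); lia.
  exists (e2 + t); split => //.
  by apply: (filtD FG_dfilt); [apply: (filt_le FG_dfilt _ Ge2) | apply: (filt_le FG_dfilt _ Gt)];
    lia.
- by rewrite [d (e2 + t)]linearD (addrC (d e2)) addrA subrK.
Qed.

Lemma page2_GO_surj s y : SSZ FO d 2 s y ->
  exists2 x, SSZ FG d 2 s x & SSNr FO d 2 s (y - x).
Proof.
move=> [Oy Ody].
have [t1 [x0 [Ot1 Gx0 Or dx0]]] := FO_to_FG Oy (fun i j _ h _ => Ody i j h).
set r := y - d t1 - x0.
have dx0E : d x0 = d y - d r.
  by rewrite /r [d (_ - x0)]linearB [d (y - _)]linearB (cube_dd Hcc) subr0 subKr.
have Odx0 : FO (s + 2) (d x0).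
  by rewrite dx0E; apply: (filtB FO_dfilt) => //; apply: (filt_d FO_dfilt).
have Gdx0 : FG s.+1 (d x0).
  move=> i j; rewrite /wG => h; case: (ltnP (i + c) (s + 2)) => hic; first exact: Odx0.
  by apply: dx0 => //; lia.
have Gddx0 : FG (s.+1 + 2) (d (d x0)) by rewrite (cube_dd Hcc); apply: (filt0 FG_dfilt).
have dx0_diag i j : (c <= j)%N -> (i + c = s.+1)%N -> p i j (d x0) = 0.
  by move=> _ h; apply: Odx0; rewrite /wO; lia.
have [t [Gt Ot Gdt Gx0t]] := FG_raise Gdx0 Gddx0 dx0_diag.
exists (x0 - t).
  split; last by rewrite linearB addn2.
  by apply: (filtB FG_dfilt) => //; rewrite subn1 in Gt.
exists (r + t), (d t1); split.
- split.
    by apply: (filtD FO_dfilt); [apply: (filt_le FO_dfilt _ Or) | apply: (filt_le FO_dfilt _ Ot)];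
      lia.
  rewrite linearD; apply: (filtD FO_dfilt); first exact: (filt_d FO_dfilt).
  by apply: (filt_d FO_dfilt); apply: (filt_le FO_dfilt _ Ot); lia.
- split; first exact: (filt_d FO_dfilt).
  by exists t1; split => //; apply: (filt_le FO_dfilt _ Ot1); lia.
- have -> : x0 - t = y - d t1 - r - t by rewrite /r subKr.
  by rewrite subKr3.
Qed.

Lemma page2_GO_inj s x : SSZ FG d 2 s x -> SSNr FO d 2 s x -> SSNr FG d 2 s x.
Proof.
move=> [Gx Gdx] [a [b [[Oa Oda] [Ob [e [Oe de]]] Ex]]].
have Eb : b = x - a by rewrite Ex addrC addKr.
have de0 i j : (i < s - 1)%N -> (i + c < s - 1 + 2)%N -> (i + j <= s - 1)%N ->
    p i j (d e) = 0.
  by move=> h1 h2 h3; rewrite de Eb linearB Gx ?Oa ?subrr // /wG /wO; lia.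
have [t1 [e' [Ot1 Ge' Or de']]] := FO_to_FG Oe de0.
set r := e - d t1 - e'; set a' := x - d e'.
have Ea' : a' = a + d r by rewrite /a' /r !linearB (cube_dd Hcc) subr0 de Ex addrA.
have Oa' : FO s.+1 a'.
  rewrite Ea'; apply: (filtD FO_dfilt) => //.
  by apply: (filt_d FO_dfilt); apply: (filt_le FO_dfilt _ Or); lia.
have Ga' : FG s a'.
  move=> i j; rewrite /wG => h; case: (ltnP (i + c) s.+1) => hic; first exact: Oa'.
  by rewrite /a' linearB Gx ?de' ?subrr // /wG; lia.
have da' : d a' = d x by rewrite /a' linearB (cube_dd Hcc) subr0.
have Gda' : FG (s + 2) (d a') by rewrite da'.
have a'_diag i j : (c <= j)%N -> (i + c = s)%N -> p i j a' = 0.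
  by move=> _ h; apply: Oa'; rewrite /wO; lia.
have [t [Gt Ot Gdt Gat]] := FG_raise Ga' Gda' a'_diag.
exists (a' - d t), (d (e' + t)); split.
- by split => //; rewrite linearB (cube_dd Hcc) subr0 da'.
- split; last by exists (e' + t); split => //; apply: (filtD FG_dfilt).
  have -> : d (e' + t) = x - a' + d t by rewrite linearD /a' subKr.
  by apply: (filtD FG_dfilt) => //; apply: (filtB FG_dfilt).
- by rewrite linearD (addrC (d e')) addrA subrK /a' subrK.
Qed.

End PageTwo.

(** * Comparison of the spectral sequences *)

Section InnerCollapse.
Variables (R : pzRingType) (V : lmodType R) (no ni : nat).
Variables (p : nat -> nat -> {linear V -> V}) (d : {linear V -> V}).
Hypothesis Hcc : cube_complex no ni p d.
Variable c : nat.
Hypothesis Hconc : inner_concentrated no ni p d c.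

Lemma chain_map_GC : chain_map (FG p c) d (FC p) d idfun.
Proof. by split => // n x; apply: FG_FC. Qed.

Lemma chain_map_GO : chain_map (FG p c) d (FO p c) d idfun.
Proof. by split => // n x; apply: FG_FO. Qed.

Lemma page_iso_GC k q : (2 <= k)%N -> page_iso (FG p c) d (FC p) d idfun k q.
Proof.
move=> k2; apply: (page_iso_from (FG_dfilt Hcc c) (FC_dfilt Hcc) (cube_dd Hcc) (cube_dd Hcc)
  chain_map_GC (k0 := 2)) => // s.
split; [exact: (chain_map_SSZ chain_map_GC) | exact: (chain_map_SSNr chain_map_GC) |
        exact: (page2_GC_surj Hcc Hconc) | exact: (page2_GC_inj Hcc Hconc)].
Qed.

Lemma page_iso_GO k q : (2 <= k)%N -> page_iso (FG p c) d (FO p c) d idfun k q.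
Proof.
move=> k2; apply: (page_iso_from (FG_dfilt Hcc c) (FO_dfilt Hcc c) (cube_dd Hcc) (cube_dd Hcc)
  chain_map_GO (k0 := 2)) => // s.
split; [exact: (chain_map_SSZ chain_map_GO) | exact: (chain_map_SSNr chain_map_GO) |
        exact: (page2_GO_surj Hcc Hconc) | exact: (page2_GO_inj Hcc Hconc)].
Qed.

Lemma FO_Fout n x : FO p c n x <-> Fout p (n - c) x.
Proof. by split => H i j h; apply: H; rewrite /wO in h *; lia. Qed.

Lemma Ek_vanish_below k q : (2 <= k)%N -> (q < c)%N ->
  sq_zero (SSZ (Fcube p) d k q) (SSN (Fcube p) d k q).
Proof.
move=> k2 qc x Zx; have k0 : (0 < k)%N by lia.
apply/SSN_SSNr => //.
have [ZC NC surjGC _] := page_iso_GC q k2.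
have [ZO _ _ injGO] := page_iso_GO q k2.
have [x0 Zx0 Nx0] := surjGC _ Zx.
have NOx0 : SSNr (FO p c) d k q x0.
  apply: (SSZ_SSNr (FO_dfilt Hcc c)); last by case: (ZO _ Zx0).
  by move=> i j; rewrite /wO; lia.
change (SSNr (FC p) d k q x); rewrite -(subrK x0 x).
apply: (submodD (submod_SSNr (FC_dfilt Hcc) k q)) => //.
exact/NC/injGO.
Qed.

End InnerCollapse.

Lemma Fout_dfiltration (R : pzRingType) (V : lmodType R) (no ni : nat)
    (p : nat -> nat -> {linear V -> V}) (d : {linear V -> V}) :
  cube_complex no ni p d -> dfiltration (Fout p) d.
Proof. by move=> Hcc; apply: (Fw_dfiltration Hcc (w := fun i _ => i)) => a b i j. Qed.

Lemma Fout_Fcube_flat (R : pzRingType) (V : lmodType R) (no : nat)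
    (p : nat -> nat -> {linear V -> V}) (d : {linear V -> V}) n x :
  cube_complex no 0 p d -> Fout p n x <-> Fcube p n x.
Proof.
move=> Hcc; split => H i j h; first by apply: H; lia.
have [->|j0] := posnP j; first by apply: H; lia.
by apply: (p_outside Hcc); rewrite j0 orbT.
Qed.

Section BraidMove.
Variables (R : pzRingType) (Va Vb : lmodType R) (no ni : nat).
Variables (pa : nat -> nat -> {linear Va -> Va}) (da : {linear Va -> Va}).
Variables (pb : nat -> nat -> {linear Vb -> Vb}) (db : {linear Vb -> Vb}).
Variable c : nat.
Hypotheses (Ha : cube_complex no ni pa da) (Hb : cube_complex no 0 pb db).
Hypothesis Hconc : inner_concentrated no ni pa da c.

Lemma Ek_iso_shift k q : (2 <= k)%N ->
  filtered_htpy_equiv (Fout pa) da (Fout pb) db ->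
  sq_iso (SSZ (Fcube pa) da k (q + c)) (SSN (Fcube pa) da k (q + c))
         (SSZ (Fcube pb) db k q) (SSN (Fcube pb) db k q).
Proof.
move=> k2 [f [g [h [h' [[fd gd] [fF gF] [hF h'F] [gf fg]]]]]].
have k0 : (0 < k)%N by lia.
have isoGO : induces_iso idfun (SSZ (FG pa c) da k (q + c)) (SSNr (FG pa c) da k (q + c))
                                (SSZ (Fout pa) da k q) (SSNr (Fout pa) da k q).
  by apply: induces_iso_equiv (page_iso_GO Ha Hconc (q + c) k2) => y;
    [apply: SSZ_shift | apply: SSNr_shift]; apply: FO_Fout.
have isof : page_iso (Fout pa) da (Fout pb) db f k q.
  exact: (page_iso_of_htpy (Fout_dfiltration Ha) (Fout_dfiltration Hb) (cube_dd Ha) (cube_dd Hb)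
          (conj fd fF) (conj gd gF) hF h'F gf fg).
have Eb n y : Fout pb n y <-> Fcube pb n y := Fout_Fcube_flat n y Hb.
have isoGb : induces_iso f (SSZ (FG pa c) da k (q + c)) (SSNr (FG pa c) da k (q + c))
                           (SSZ (Fcube pb) db k q) (SSNr (Fcube pb) db k q).
  apply: induces_iso_equiv (induces_iso_comp (submod_SSNr (Fout_dfiltration Hb) k q) isoGO isof)
    => y.
  - exact: (SSZ_equiv db Eb).
  - exact: (SSNr_equiv db Eb).
have SQG := page_subquotient (FG_dfilt Ha c) (cube_dd Ha) (q + c) k0.
have SQC := page_subquotient (FC_dfilt Ha) (cube_dd Ha) (q + c) k0.
have wcube : monotone_weight (fun i j => (i + j)%N) by move=> a b i j ha hb; lia.
have SQb := page_subquotient (Fw_dfiltration Hb wcube) (cube_dd Hb) q k0.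
apply: (sq_iso_equiv _ _ _ _ (sq_iso_of_span SQG SQC SQb (page_iso_GC Ha Hconc (q + c) k2) isoGb))
  => ? //; exact: iff_sym (SSN_SSNr _ _ _ _ k0).
Qed.

End BraidMove.

Theorem theorem3p1 (R : pzRingType) (Va Vb : lmodType R) (no ni : nat)
    (pa : nat -> nat -> {linear Va -> Va}) (da : {linear Va -> Va})
    (pb : nat -> nat -> {linear Vb -> Vb}) (db : {linear Vb -> Vb})
    (c : nat) :
  ni \in [:: 1%N; 2%N; 6%N] ->
  cube_complex no ni pa da ->
  cube_complex no 0 pb db ->
  filtered_htpy_equiv (Fout pa) da (Fout pb) db ->
  inner_concentrated no ni pa da c ->
  forall k : nat, (2 <= k)%N ->
    (forall q : nat,
       sq_iso (SSZ (Fcube pa) da k (q + c)) (SSN (Fcube pa) da k (q + c))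
              (SSZ (Fcube pb) db k q) (SSN (Fcube pb) db k q)) /\
    (forall p : nat, (p < c)%N ->
       sq_zero (SSZ (Fcube pa) da k p) (SSN (Fcube pa) da k p)).
Proof.
(* Which braid-like move is performed (the value of [ni]) plays no role. *)
move=> _ Ha Hb Hhe Hconc k k2; split => [q | p pc].
- exact: (Ek_iso_shift Ha Hb Hconc q k2 Hhe).
- exact: (Ek_vanish_below Ha Hconc k2 pc).
Qed.
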